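(* A Turing degree $\mathbf{d}$ is low for embeddings if and only if it is low for bi-embeddings.
   Context: A Turing degree $\mathbf{d}$ is low for embeddings if for all computable structures $\mathcal{A},\mathcal{B}$: whenever there is a $\mathbf{d}$-computable isomorphic embedding $f\colon\mathcal{A}\hookrightarrow\mathcal{B}$, there is a computable isomorphic embedding $g\colon\mathcal{A}\hookrightarrow\mathcal{B}$. Write $\mathcal{A}\approx_{\mathbf{d}}\mathcal{B}$ if there are $\mathbf{d}$-computable embeddings $\mathcal{A}\hookrightarrow\mathcal{B}$ and $\mathcal{B}\hookrightarrow\mathcal{A}$. The degree $\mathbf{d}$ is low for bi-embeddings if for all computable structures $\mathcal{A},\mathcal{B}$, $\mathcal{A}\approx_{\mathbf{d}}\mathcal{B}$ implies $\mathcal{A}\approx_{\mathbf{0}}\mathcal{B}$. *)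

From Stdlib Require Import List Arith.
Import ListNotations.

Inductive rf : Type :=
| RZero
| RSucc
| RProj (i : nat)
| ROracle
| RComp (f : rf) (gs : list rf)
| RPrim (f g : rf)
| RMu (f : rf).

Inductive eval (O : nat -> bool) : rf -> list nat -> nat -> Prop :=
| ev_zero xs : eval O RZero xs 0
| ev_succ xs : eval O RSucc xs (S (hd 0 xs))
| ev_proj i xs : eval O (RProj i) xs (nth i xs 0)
| ev_oracle xs : eval O ROracle xs (if O (hd 0 xs) then 1 else 0)
| ev_comp f gs xs ys y :
    evals O gs xs ys -> eval O f ys y -> eval O (RComp f gs) xs y
| ev_prim0 f g xs y :
    eval O f xs y -> eval O (RPrim f g) (0 :: xs) y
| ev_primS f g n xs r y :
    eval O (RPrim f g) (n :: xs) r -> eval O g (n :: r :: xs) y ->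
    eval O (RPrim f g) (S n :: xs) y
| ev_mu f xs y :
    eval O f (y :: xs) 0 ->
    (forall z, z < y -> exists v, v <> 0 /\ eval O f (z :: xs) v) ->
    eval O (RMu f) xs y
with evals (O : nat -> bool) : list rf -> list nat -> list nat -> Prop :=
| evs_nil xs : evals O [] xs []
| evs_cons g gs xs y ys :
    eval O g xs y -> evals O gs xs ys -> evals O (g :: gs) xs (y :: ys).

Definition O_computable (O : nat -> bool) (h : nat -> nat) : Prop :=
  exists e : rf, forall x, eval O e [x] (h x).

Definition empty_oracle : nat -> bool := fun _ => false.

Definition computable_fun (h : nat -> nat) : Prop := O_computable empty_oracle h.

Definition b2n (b : bool) : nat := if b then 1 else 0.

(** A structure with universe a subset [sdom] of nat, in a language with
    relation symbols indexed by nat, symbol [i] having arity [sar i];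
    [srel i xs] is the truth value of [R_i(xs)]. (Constants and functions are
    represented by their graphs.) *)
Record structure : Type := Structure {
  sdom : nat -> bool;
  sar  : nat -> nat;
  srel : nat -> list nat -> bool
}.

Definition in_dom (A : structure) (xs : list nat) : Prop :=
  forall x, In x xs -> sdom A x = true.

Definition computable_structure (A : structure) : Prop :=
  computable_fun (fun x => b2n (sdom A x)) /\
  computable_fun (sar A) /\
  exists e : rf, forall i xs,
    length xs = sar A i -> in_dom A xs ->
    eval empty_oracle e (i :: xs) (b2n (srel A i xs)).

Definition is_embedding (A B : structure) (f : nat -> nat) : Prop :=
  (forall i, sar A i = sar B i) /\
  (forall x, sdom A x = true -> sdom B (f x) = true) /\
  (forall x y, sdom A x = true -> sdom A y = true -> f x = f y -> x = y) /\
  (forall i xs, length xs = sar A i -> in_dom A xs ->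
     srel B i (map f xs) = srel A i xs).

Definition O_embeds (O : nat -> bool) (A B : structure) : Prop :=
  exists f, O_computable O f /\ is_embedding A B f.

Definition O_biembeddable (O : nat -> bool) (A B : structure) : Prop :=
  O_embeds O A B /\ O_embeds O B A.

(** A Turing degree is represented by any set [D] (characteristic function)
    of that degree; both notions below are degree invariant. *)
Definition low_for_embeddings (D : nat -> bool) : Prop :=
  forall A B : structure,
    computable_structure A -> computable_structure B ->
    O_embeds D A B -> O_embeds empty_oracle A B.

Definition low_for_biembeddings (D : nat -> bool) : Prop :=
  forall A B : structure,
    computable_structure A -> computable_structure B ->
    O_biembeddable D A B -> O_biembeddable empty_oracle A B.

From Stdlib Require Import List Arith Lia Cantor Classical.
Import ListNotations.
Open Scope bool_scope.

(* Suppose D is low for bi-embeddings and f : A -> B is a D-computable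
   embedding, with a0 in A.  Let S be the disjoint union of one copy of A and
   infinitely many copies of B, and X the disjoint union of infinitely many
   copies of B, with "lying in the same copy" as an extra relation.  S embeds
   into X by f on the copy of A and the identity elsewhere, and X embeds into S
   by shifting copies, both D-computably; so S and X are computably
   bi-embeddable.  A computable embedding S -> X sends the copy of A into a
   single copy of B, which yields a computable embedding A -> B.  If A is empty
   every map is an embedding, and the converse implication is immediate. *)

(** * Cantor pairing and arithmetic programs *)

Definition cpair (c v : nat) : nat := to_nat (c, v).
Definition cfst (x : nat) : nat := fst (of_nat x).
Definition csnd (x : nat) : nat := snd (of_nat x).

Arguments cpair : simpl never.
Arguments cfst : simpl never.
Arguments csnd : simpl never.

Lemma cfst_pair c v : cfst (cpair c v) = c.
Proof. unfold cfst, cpair. now rewrite cancel_of_to. Qed.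

Lemma csnd_pair c v : csnd (cpair c v) = v.
Proof. unfold csnd, cpair. now rewrite cancel_of_to. Qed.

Lemma cpair_eta x : cpair (cfst x) (csnd x) = x.
Proof. unfold cpair, cfst, csnd. now rewrite <- surjective_pairing, cancel_to_of. Qed.

Lemma cpair_inj c v c' v' : cpair c v = cpair c' v' -> c = c' /\ v = v'.
Proof. unfold cpair. intros H. apply to_nat_inj in H. now injection H. Qed.

Definition tri (n : nat) : nat := nat_rec (fun _ => nat) 0 (fun i m => S i + m) n.

Lemma cpair_tri c v : cpair c v = v + tri (v + c).
Proof. reflexivity. Qed.

Lemma tri_S n : tri (S n) = S n + tri n.
Proof. reflexivity. Qed.

Lemma tri_le_mono m n : m <= n -> tri m <= tri n.
Proof. induction 1; rewrite ?tri_S; lia. Qed.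

Lemma tri_bracket x :
  x = csnd x + tri (cfst x + csnd x) /\ x < tri (S (cfst x + csnd x)).
Proof.
  pose proof (cpair_eta x) as Hx.
  rewrite cpair_tri, (Nat.add_comm (csnd x) (cfst x)) in Hx.
  split; [lia|]. rewrite tri_S. lia.
Qed.

Definition cond (t u w : nat) : nat := match t with 0 => w | S _ => u end.

Lemma cond_b2n (b : bool) u w : cond (b2n b) u w = if b then u else w.
Proof. now destruct b. Qed.

Definition c_succ (g : rf) : rf := RComp RSucc [g].
Fixpoint c_const (n : nat) : rf := match n with 0 => RZero | S n => c_succ (c_const n) end.
Definition c_add (x y : rf) : rf := RComp (RPrim (RProj 0) (c_succ (RProj 1))) [x; y].
Definition c_pred (x : rf) : rf := RComp (RPrim RZero (RProj 0)) [x].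
Definition c_sub (x y : rf) : rf := RComp (RPrim (RProj 0) (c_pred (RProj 1))) [y; x].
Definition c_cond (t u w : rf) : rf := RComp (RPrim (RProj 1) (RProj 2)) [t; u; w].
Definition c_eqb (x y : rf) : rf :=
  c_cond (c_add (c_sub x y) (c_sub y x)) (c_const 0) (c_const 1).
Definition c_ltb (x y : rf) : rf := c_cond (c_sub y x) (c_const 1) (c_const 0).
Definition c_tri (x : rf) : rf :=
  RComp (RPrim RZero (c_add (c_succ (RProj 0)) (RProj 1))) [x].

(* [cpair c v = v + tri (v + c)]; decoding searches for the diagonal [s] of [x],
   the least [s] with [x < tri (S s)]. *)
Definition c_pair (x y : rf) : rf := c_add y (c_tri (c_add y x)).
Definition diag_code : rf := RMu (c_sub (c_succ (RProj 1)) (c_tri (c_succ (RProj 0)))).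
Definition c_snd (x : rf) : rf := RComp (c_sub (RProj 0) (c_tri diag_code)) [x].
Definition c_fst (x : rf) : rf :=
  RComp (c_sub diag_code (c_sub (RProj 0) (c_tri diag_code))) [x].

Section Programs.
Variable O : nat -> bool.

Lemma eval_eq e xs y z : eval O e xs y -> y = z -> eval O e xs z.
Proof. now intros ? <-. Qed.

Lemma eval_proj_nth i xs y : nth i xs 0 = y -> eval O (RProj i) xs y.
Proof. intros <-. apply ev_proj. Qed.

Lemma eval_comp1 f g xs y z :
  eval O g xs y -> eval O f [y] z -> eval O (RComp f [g]) xs z.
Proof. intros. eapply ev_comp; [repeat constructor|]; eassumption. Qed.

Lemma eval_comp2 f g1 g2 xs y1 y2 z :
  eval O g1 xs y1 -> eval O g2 xs y2 -> eval O f [y1; y2] z ->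
  eval O (RComp f [g1; g2]) xs z.
Proof. intros. eapply ev_comp; [repeat constructor|]; eassumption. Qed.

Lemma eval_comp3 f g1 g2 g3 xs y1 y2 y3 z :
  eval O g1 xs y1 -> eval O g2 xs y2 -> eval O g3 xs y3 -> eval O f [y1; y2; y3] z ->
  eval O (RComp f [g1; g2; g3]) xs z.
Proof. intros. eapply ev_comp; [repeat constructor|]; eassumption. Qed.

Lemma evals_map (G : nat -> rf) (W : nat -> nat) l xs :
  (forall j, eval O (G j) xs (W j)) -> evals O (map G l) xs (map W l).
Proof. intros H. induction l; constructor; auto. Qed.

Lemma eval_succ g xs y : eval O g xs y -> eval O (c_succ g) xs (S y).
Proof. intros. eapply eval_comp1; [eassumption|]. apply (ev_succ O [y]). Qed.

Lemma eval_const n xs : eval O (c_const n) xs n.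
Proof. induction n; cbn; [apply ev_zero | now apply eval_succ]. Qed.

Lemma eval_add x y xs X Y :
  eval O x xs X -> eval O y xs Y -> eval O (c_add x y) xs (X + Y).
Proof.
  intros Hx Hy. eapply eval_comp2; [exact Hx | exact Hy |]. clear Hx.
  induction X as [|X IH].
  - apply ev_prim0. now apply eval_proj_nth.
  - eapply ev_primS; [exact IH|]. now apply eval_succ, eval_proj_nth.
Qed.

Lemma eval_pred x xs X : eval O x xs X -> eval O (c_pred x) xs (pred X).
Proof.
  intros Hx. eapply eval_comp1; [exact Hx|]. clear Hx.
  induction X as [|X IH].
  - apply ev_prim0, ev_zero.
  - eapply ev_primS; [exact IH|]. now apply eval_proj_nth.
Qed.

Lemma eval_sub x y xs X Y :
  eval O x xs X -> eval O y xs Y -> eval O (c_sub x y) xs (X - Y).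
Proof.
  intros Hx Hy. eapply eval_comp2; [exact Hy | exact Hx |]. clear Hy.
  induction Y as [|Y IH].
  - apply ev_prim0. apply eval_proj_nth. cbn. lia.
  - eapply ev_primS; [exact IH|]. replace (X - S Y) with (pred (X - Y)) by lia.
    now apply eval_pred, eval_proj_nth.
Qed.

Lemma eval_cond t u w xs T U W :
  eval O t xs T -> eval O u xs U -> eval O w xs W -> eval O (c_cond t u w) xs (cond T U W).
Proof.
  intros Ht Hu Hw. eapply eval_comp3; [exact Ht | exact Hu | exact Hw |].
  assert (Hdef : forall m, exists r, eval O (RPrim (RProj 1) (RProj 2)) [m; U; W] r).
  { induction m as [|m [r Hr]]; eexists.
    - now apply ev_prim0, eval_proj_nth.
    - eapply ev_primS; [exact Hr | now apply eval_proj_nth]. }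
  destruct T as [|T].
  - now apply ev_prim0, eval_proj_nth.
  - destruct (Hdef T) as [r Hr]. eapply ev_primS; [exact Hr | now apply eval_proj_nth].
Qed.

Lemma eval_eqb x y xs X Y :
  eval O x xs X -> eval O y xs Y -> eval O (c_eqb x y) xs (b2n (X =? Y)).
Proof.
  intros Hx Hy. eapply eval_eq.
  - apply eval_cond; [apply eval_add; apply eval_sub; eassumption | apply eval_const ..].
  - destruct (Nat.eqb_spec X Y) as [<-|HXY].
    + now rewrite Nat.sub_diag.
    + destruct (X - Y + (Y - X)) eqn:E; [lia | reflexivity].
Qed.

Lemma eval_ltb x y xs X Y :
  eval O x xs X -> eval O y xs Y -> eval O (c_ltb x y) xs (b2n (X <? Y)).
Proof.
  intros Hx Hy. eapply eval_eq.
  - apply eval_cond; [apply eval_sub; eassumption | apply eval_const ..].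
  - destruct (Nat.ltb_spec X Y); destruct (Y - X) eqn:E; cbn; lia.
Qed.

Lemma eval_tri x xs X : eval O x xs X -> eval O (c_tri x) xs (tri X).
Proof.
  intros Hx. eapply eval_comp1; [exact Hx|]. clear Hx.
  induction X as [|X IH].
  - apply ev_prim0, ev_zero.
  - eapply ev_primS; [exact IH|].
    apply eval_add; [apply eval_succ|]; now apply eval_proj_nth.
Qed.

Lemma eval_pair x y xs X Y :
  eval O x xs X -> eval O y xs Y -> eval O (c_pair x y) xs (cpair X Y).
Proof.
  intros Hx Hy. apply eval_add; [exact Hy|]. now apply eval_tri, eval_add.
Qed.

Lemma eval_diag x : eval O diag_code [x] (cfst x + csnd x).
Proof.
  destruct (tri_bracket x) as [Hx Hlt].
  assert (Hstep : forall z, eval O (c_sub (c_succ (RProj 1)) (c_tri (c_succ (RProj 0))))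
                    [z; x] (S x - tri (S z))).
  { intros z. apply eval_sub; [apply eval_succ | apply eval_tri, eval_succ];
    now apply eval_proj_nth. }
  apply ev_mu.
  - eapply eval_eq; [apply Hstep | lia].
  - intros z Hz. exists (S x - tri (S z)). split; [|apply Hstep].
    pose proof (tri_le_mono (S z) (cfst x + csnd x) Hz). lia.
Qed.

Lemma eval_snd x xs X : eval O x xs X -> eval O (c_snd x) xs (csnd X).
Proof.
  intros Hx. eapply eval_comp1; [exact Hx|]. destruct (tri_bracket X) as [HX _].
  eapply eval_eq; [apply eval_sub; [now apply eval_proj_nth | apply eval_tri, eval_diag]|].
  cbn. lia.
Qed.

Lemma eval_fst x xs X : eval O x xs X -> eval O (c_fst x) xs (cfst X).
Proof.
  intros Hx. eapply eval_comp1; [exact Hx|]. destruct (tri_bracket X) as [HX _].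
  eapply eval_eq.
  - apply eval_sub; [apply eval_diag|].
    apply eval_sub; [now apply eval_proj_nth | apply eval_tri, eval_diag].
  - cbn. lia.
Qed.

End Programs.

(** * Locality of evaluation *)

Fixpoint width (e : rf) : nat :=
  match e with
  | RZero => 0
  | RSucc | ROracle => 1
  | RProj i => S i
  | RComp _ gs => list_max (map width gs)
  | RPrim f g => S (max (width f) (width g))
  | RMu f => width f
  end.

Definition agree_upto (b : nat) (env env' : list nat) : Prop :=
  b <= length env' /\ forall i, i < b -> nth i env 0 = nth i env' 0.

Lemma agree_upto_le b b' env env' :
  b' <= b -> agree_upto b env env' -> agree_upto b' env env'.
Proof. intros Hb [Hlen Hnth]. split; [lia | intros i Hi; apply Hnth; lia]. Qed.

Lemma agree_upto_cons b n xs xs' :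
  agree_upto b xs xs' -> agree_upto (S b) (n :: xs) (n :: xs').
Proof.
  intros [Hlen Hnth]. split; [cbn; lia|].
  intros [|i] Hi; [reflexivity | apply Hnth; lia].
Qed.

Lemma agree_upto_uncons b n xs env' :
  agree_upto (S b) (n :: xs) env' -> exists xs', env' = n :: xs' /\ agree_upto b xs xs'.
Proof.
  intros [Hlen Hnth]. destruct env' as [|m xs']; [cbn in Hlen; lia|].
  exists xs'. specialize (Hnth 0 (Nat.lt_0_succ b)) as Hnm; cbn in Hnm; subst m.
  split; [reflexivity|]. split; [cbn in Hlen; lia|].
  intros i Hi. apply (Hnth (S i)). lia.
Qed.

Lemma agree_upto_hd env env' :
  agree_upto 1 env env' -> hd 0 env = hd 0 env'.
Proof.
  intros [_ Hnth]. specialize (Hnth 0 Nat.lt_0_1). now destruct env, env'.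
Qed.

(* Recursion on the derivation reaches the nested derivations of the [RMu] rule,
   which the generated induction principles do not cover. *)
Fixpoint eval_local O e env y (H : eval O e env y) {struct H} :
  forall env', agree_upto (width e) env env' -> eval O e env' y
with evals_local O gs env ys (H : evals O gs env ys) {struct H} :
  forall env', agree_upto (list_max (map width gs)) env env' -> evals O gs env' ys.
Proof.
  - destruct H as [xs|xs|i xs|xs|f gs xs ys y Hgs Hf|f g xs y Hf|f g n xs r y Hrec Hg
                  |f xs y Hf Hbelow];
      intros env' Hagree; cbn [width] in Hagree.
    + apply ev_zero.
    + rewrite (agree_upto_hd _ _ Hagree). apply ev_succ.
    + destruct Hagree as [_ Hnth]. rewrite (Hnth i (Nat.lt_succ_diag_r i)). apply ev_proj.
    + rewrite (agree_upto_hd _ _ Hagree). apply ev_oracle.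
    + eapply ev_comp; [exact (evals_local _ _ _ _ Hgs _ Hagree) | exact Hf].
    + destruct (agree_upto_uncons _ _ _ _ Hagree) as [xs' [-> Hxs]].
      apply ev_prim0. apply (eval_local _ _ _ _ Hf).
      eapply agree_upto_le; [|exact Hxs]. lia.
    + destruct (agree_upto_uncons _ _ _ _ Hagree) as [xs' [-> Hxs]].
      eapply ev_primS.
      * apply (eval_local _ _ _ _ Hrec). now apply agree_upto_cons.
      * apply (eval_local _ _ _ _ Hg).
        eapply agree_upto_le; [|apply agree_upto_cons, agree_upto_cons, Hxs]. lia.
    + apply ev_mu.
      * apply (eval_local _ _ _ _ Hf).
        eapply agree_upto_le; [|apply agree_upto_cons, Hagree]. lia.
      * intros z Hz. destruct (Hbelow z Hz) as [v [Hv Hev]]. exists v.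
        split; [exact Hv|]. apply (eval_local _ _ _ _ Hev).
        eapply agree_upto_le; [|apply agree_upto_cons, Hagree]. lia.
  - destruct H as [xs|g gs xs y ys Hg Hgs]; intros env' Hagree; cbn [map] in Hagree.
    + apply evs_nil.
    + change (agree_upto (max (width g) (list_max (map width gs))) xs env') in Hagree.
      apply evs_cons.
      * apply (eval_local _ _ _ _ Hg). eapply agree_upto_le; [|exact Hagree]. lia.
      * apply (evals_local _ _ _ _ Hgs). eapply agree_upto_le; [|exact Hagree]. lia.
Qed.

(* On input [i :: xs], [rZ] is run on [pred i] followed by [M] arguments, the
   [j]-th being [tc (cfst x_0) x_j] if [j < sar Z (pred i)] and [0] otherwise;
   once [width rZ <= M], [eval_local] identifies this with the genuine query. *)
Definition map_rel_code (rZ sZ tc : rf) (M : nat) : rf :=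
  RComp rZ (c_pred (RProj 0) ::
            map (fun j => c_cond (c_ltb (c_const j) (RComp sZ [c_pred (RProj 0)]))
                                 (RComp tc [c_fst (RProj 1); RProj (S j)])
                                 (c_const 0))
                (seq 0 M)).

Section MapRel.
Variables (O : nat -> bool) (Z : structure) (rZ sZ tc : rf) (t : nat -> nat -> nat).
Hypothesis HrZ : forall i xs, length xs = sar Z i -> in_dom Z xs ->
                   eval O rZ (i :: xs) (b2n (srel Z i xs)).
Hypothesis HsZ : forall i, eval O sZ [i] (sar Z i).
Hypothesis Htc : forall c y, eval O tc [c; y] (t c y).
Hypothesis Ht : forall c y, sdom Z (t c y) = true.

(* Every index [i] is a valid query, for symbol [pred i]: this matters because
   [c_cond] evaluates both of its branches. *)
Lemma eval_map_rel M i xs :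
  width rZ <= M ->
  let c := cfst (nth 0 xs 0) in
  eval O (map_rel_code rZ sZ tc M) (i :: xs)
    (b2n (srel Z (pred i) (map (fun j => t c (nth j xs 0)) (seq 0 (sar Z (pred i)))))).
Proof.
  intros HM c. set (k := pred i).
  set (x := fun j => t c (nth j xs 0)).
  set (arg := fun j => if j <? sar Z k then x j else 0).
  set (ys := map x (seq 0 (sar Z k))).
  assert (Hk : eval O (c_pred (RProj 0)) (i :: xs) k)
    by (apply (eval_pred O (RProj 0) _ i); now apply eval_proj_nth).
  assert (Hys : eval O rZ (k :: ys) (b2n (srel Z k ys))).
  { apply HrZ; [unfold ys; now rewrite length_map, length_seq|].
    intros y Hy. unfold ys in Hy. apply in_map_iff in Hy as [j [<- _]]. apply Ht. }
  eapply ev_comp.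
  - apply evs_cons; [exact Hk|]. apply (evals_map O _ arg). intros j.
    unfold arg. rewrite <- cond_b2n. apply eval_cond; [| |apply eval_const].
    + apply eval_ltb; [apply eval_const|]. eapply eval_comp1; [exact Hk | apply HsZ].
    + eapply eval_comp2; [apply eval_fst, eval_proj_nth; reflexivity
                         | apply eval_proj_nth; reflexivity | apply Htc].
  - apply (eval_local _ _ _ _ Hys).
    split; [cbn [length]; rewrite length_map, length_seq; lia|].
    intros [|j] Hj; [reflexivity|]. cbn [nth].
    rewrite (nth_indep (map arg (seq 0 M)) 0 (arg 0))
      by (rewrite length_map, length_seq; lia).
    rewrite map_nth, seq_nth, Nat.add_0_l by lia. unfold arg, ys.
    destruct (Nat.ltb_spec j (sar Z k)).
    + rewrite (nth_indep _ 0 (x 0)) by (rewrite length_map, length_seq; lia).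
      now rewrite map_nth, seq_nth.
    + apply nth_overflow. rewrite length_map, length_seq. lia.
Qed.

End MapRel.

(** * Disjoint unions of structures *)

Section Union.
Variable ar : nat -> nat.

Definition retract (Z : structure) (z0 c y : nat) : nat :=
  if (cfst y =? c) && sdom Z (csnd y) then csnd y else z0.

(* The element [v] of the [c]-th summand [Z c] is coded by [cpair c v].  Symbol
   [0] is "same summand"; symbol [S k] is evaluated in the summand of the first
   argument, the remaining arguments being moved into it by [retract]: a code
   can only inspect finitely many arguments, so it cannot check that they all
   lie in one summand.  Nullary symbols are read in summand [cfst 0 = 0]. *)
Definition union (Z : nat -> structure) (z : nat -> nat) : structure :=
  Structure (fun x => sdom (Z (cfst x)) (csnd x))
            (fun i => match i with 0 => 2 | S k => ar k end)
            (fun i xs => match i with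
                         | 0 => cfst (nth 0 xs 0) =? cfst (nth 1 xs 0)
                         | S k => let c := cfst (nth 0 xs 0) in
                                  srel (Z c) k (map (retract (Z c) (z c) c) xs)
                         end).

Definition pointed (Z : nat -> structure) (z : nat -> nat) : Prop :=
  forall c, (forall i, sar (Z c) i = ar i) /\ sdom (Z c) (z c) = true.

Definition union_map (sigma : nat -> nat) (g : nat -> nat -> nat) (x : nat) : nat :=
  cpair (sigma (cfst x)) (g (cfst x) (csnd x)).

Lemma cfst_union_map sigma g x : cfst (union_map sigma g x) = sigma (cfst x).
Proof. apply cfst_pair. Qed.

Lemma retract_dom Z z0 c y : sdom Z z0 = true -> sdom Z (retract Z z0 c y) = true.
Proof. unfold retract. now destruct (_ && _) eqn:E; [apply andb_prop in E as [_ ->]|]. Qed.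

Lemma retract_home Z z0 c y :
  cfst y = c -> sdom Z (csnd y) = true -> retract Z z0 c y = csnd y.
Proof. intros <- Hy. unfold retract. now rewrite Nat.eqb_refl, Hy. Qed.

Lemma retract_away Z z0 c y : cfst y <> c -> retract Z z0 c y = z0.
Proof. intros Hy. unfold retract. apply Nat.eqb_neq in Hy. now rewrite Hy. Qed.

Lemma union_map_retract Z Z' z z' sigma g c y :
  (forall c c', sigma c = sigma c' -> c = c') ->
  is_embedding (Z c) (Z' (sigma c)) (g c) -> g c (z c) = z' (sigma c) ->
  sdom (Z (cfst y)) (csnd y) = true ->
  retract (Z' (sigma c)) (z' (sigma c)) (sigma c) (union_map sigma g y)
  = g c (retract (Z c) (z c) c y).
Proof.
  intros Hsigma [_ [Hdom _]] Hz Hy. unfold union_map.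
  destruct (Nat.eq_dec (cfst y) c) as [Hc|Hc].
  - rewrite Hc in Hy |- *. rewrite !retract_home; rewrite ?cfst_pair, ?csnd_pair; auto.
  - rewrite !retract_away; rewrite ?cfst_pair; auto.
Qed.

Lemma union_map_embedding Z Z' z z' sigma g :
  pointed Z z -> (forall c c', sigma c = sigma c' -> c = c') ->
  (forall c, is_embedding (Z c) (Z' (sigma c)) (g c)) ->
  (forall c, g c (z c) = z' (sigma c)) ->
  (forall k, ar k = 0 -> srel (Z' 0) k [] = srel (Z 0) k []) ->
  is_embedding (union Z z) (union Z' z') (union_map sigma g).
Proof.
  intros HZ Hsigma Hg Hz Hnullary.
  split; [reflexivity | split; [|split]].
  - intros x Hx. cbn [sdom union] in *. unfold union_map.
    rewrite cfst_pair, csnd_pair. now apply Hg.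
  - intros x y Hx Hy Hxy. cbn [sdom union] in Hx, Hy. unfold union_map in Hxy.
    apply cpair_inj in Hxy as [Hc Hv]. apply Hsigma in Hc. rewrite Hc in Hx, Hv.
    apply Hg in Hv; [|exact Hx|exact Hy].
    now rewrite <- (cpair_eta x), <- (cpair_eta y), Hc, Hv.
  - intros [|k] xs Hlen Hxs.
    + destruct xs as [|x0 [|x1 [|]]]; try discriminate. cbn. unfold union_map.
      rewrite !cfst_pair.
      destruct (Nat.eqb_spec (cfst x0) (cfst x1)) as [->|Hne].
      * apply Nat.eqb_refl.
      * apply Nat.eqb_neq. intros E. now apply Hne, Hsigma.
    + destruct xs as [|x0 xs]; [exact (Hnullary k (eq_sym Hlen))|].
      cbn [srel union]. change (nth 0 (x0 :: xs) 0) with x0.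
      change (nth 0 (map (union_map sigma g) (x0 :: xs)) 0) with (union_map sigma g x0).
      rewrite cfst_union_map. set (c := cfst x0).
      destruct (HZ c) as [Har Hzc].
      rewrite map_map, (map_ext_in _ (fun y => g c (retract (Z c) (z c) c y))).
      * rewrite <- map_map. apply Hg.
        -- rewrite length_map, Har. exact Hlen.
        -- intros v Hv. apply in_map_iff in Hv as [y [<- _]]. now apply retract_dom.
      * intros y Hy. apply union_map_retract; auto. now apply Hxs.
Qed.

Lemma union_embedding_same_copy Z Z' z z' h x y :
  is_embedding (union Z z) (union Z' z') h ->
  sdom (union Z z) x = true -> sdom (union Z z) y = true ->
  (cfst (h x) =? cfst (h y)) = (cfst x =? cfst y).
Proof.
  intros [_ [_ [_ Hrel]]] Hx Hy.
  apply (Hrel 0 [x; y] eq_refl). now intros v [<-|[<-|[]]].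
Qed.

Lemma union_embedding_component Z Z' z z' h c :
  pointed Z z -> pointed Z' z' ->
  (forall c' k, ar k = 0 -> srel (Z' c') k [] = srel (Z c) k []) ->
  is_embedding (union Z z) (union Z' z') h ->
  exists c', is_embedding (Z c) (Z' c') (fun a => csnd (h (cpair c a))).
Proof.
  intros HZ HZ' Hnullary Hh. pose proof Hh as [_ [Hdom [Hinj Hrel]]].
  destruct (HZ c) as [Har Hzc].
  set (c' := cfst (h (cpair c (z c)))). exists c'.
  assert (Hin : forall a, sdom (Z c) a = true -> sdom (union Z z) (cpair c a) = true).
  { intros a Ha. cbn. now rewrite cfst_pair, csnd_pair. }
  assert (Hcopy : forall a, sdom (Z c) a = true -> cfst (h (cpair c a)) = c').
  { intros a Ha. unfold c'. apply Nat.eqb_eq.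
    rewrite (union_embedding_same_copy _ _ _ _ _ _ _ Hh), !cfst_pair; auto.
    apply Nat.eqb_refl. }
  assert (HdomH : forall a, sdom (Z c) a = true ->
                    sdom (Z' c') (csnd (h (cpair c a))) = true).
  { intros a Ha. rewrite <- (Hcopy a Ha). exact (Hdom _ (Hin a Ha)). }
  split; [|split; [exact HdomH | split]].
  - intros i. rewrite Har. symmetry. apply HZ'.
  - intros a b Ha Hb Hab.
    assert (E : h (cpair c a) = h (cpair c b)).
    { now rewrite <- (cpair_eta (h (cpair c a))), <- (cpair_eta (h (cpair c b))),
        Hcopy, Hcopy, Hab. }
    apply Hinj in E; [|now apply Hin ..]. now apply cpair_inj in E as [_ E].
  - intros k [|x0 xs] Hlen Hxs; [apply Hnullary; now rewrite <- Har|].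
    set (l := x0 :: xs) in *.
    assert (Hx0 : sdom (Z c) x0 = true) by (apply Hxs; left; reflexivity).
    assert (Hsrc : map (fun a => retract (Z c) (z c) c (cpair c a)) l = l).
    { rewrite <- map_id. apply map_ext_in. intros a Ha.
      rewrite retract_home; rewrite ?cfst_pair, ?csnd_pair; auto. }
    assert (Htgt : map (fun a => retract (Z' c') (z' c') c' (h (cpair c a))) l
                   = map (fun a => csnd (h (cpair c a))) l).
    { apply map_ext_in. intros a Ha. apply retract_home; auto. }
    specialize (Hrel (S k) (map (cpair c) l)). cbn [srel union] in Hrel.
    change (nth 0 (map h (map (cpair c) l)) 0) with (h (cpair c x0)) in Hrel.
    change (nth 0 (map (cpair c) l) 0) with (cpair c x0) in Hrel.
    rewrite cfst_pair, (Hcopy x0 Hx0), !map_map, Hsrc, Htgt in Hrel.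
    apply Hrel.
    + now rewrite length_map, Hlen, Har.
    + intros x Hx. apply in_map_iff in Hx as [a [<- Ha]]. now apply Hin, Hxs.
Qed.

End Union.

(** * Copies of two structures *)

Lemma map_nth_seq (f : nat -> nat) xs :
  map (fun j => f (nth j xs 0)) (seq 0 (length xs)) = map f xs.
Proof.
  induction xs as [|x xs IH]; [reflexivity|]. cbn. f_equal.
  now rewrite <- seq_shift, map_map.
Qed.

Definition copies (n : nat) (A B : structure) (a0 b0 : nat) : structure :=
  union (sar B) (fun c => if c <? n then A else B) (fun c => if c <? n then a0 else b0).

Definition retract_code (dZ : rf) (z0 : nat) : rf :=
  c_cond (c_eqb (c_fst (RProj 1)) (RProj 0))
         (c_cond (RComp dZ [c_snd (RProj 1)]) (c_snd (RProj 1)) (c_const z0))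
         (c_const z0).

Lemma eval_retract O Z dZ z0 c y :
  (forall x, eval O dZ [x] (b2n (sdom Z x))) ->
  eval O (retract_code dZ z0) [c; y] (retract Z z0 c y).
Proof.
  intros HdZ. eapply eval_eq.
  - apply eval_cond; [| apply eval_cond | apply eval_const].
    + apply eval_eqb; [apply eval_fst|]; now apply eval_proj_nth.
    + eapply eval_comp1; [apply eval_snd; now apply eval_proj_nth | apply HdZ].
    + apply eval_snd. now apply eval_proj_nth.
    + apply eval_const.
  - unfold retract. rewrite !cond_b2n. cbn [nth].
    now destruct (cfst y =? c), (sdom Z (csnd y)).
Qed.

Lemma copies_computable n A B a0 b0 :
  computable_structure A -> computable_structure B ->
  (forall i, sar A i = sar B i) -> sdom A a0 = true -> sdom B b0 = true ->
  computable_structure (copies n A B a0 b0).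
Proof.
  intros [[dA HdA] [[sA HsA] [rA HrA]]] [[dB HdB] [[sB HsB] [rB HrB]]] Hsar Ha0 Hb0.
  split; [|split].
  - exists (c_cond (c_ltb (c_fst (RProj 0)) (c_const n))
                   (RComp dA [c_snd (RProj 0)]) (RComp dB [c_snd (RProj 0)])).
    intros x. eapply eval_eq.
    + apply eval_cond.
      * apply eval_ltb; [apply eval_fst, eval_proj_nth; reflexivity | apply eval_const].
      * eapply eval_comp1; [apply eval_snd, eval_proj_nth; reflexivity | apply HdA].
      * eapply eval_comp1; [apply eval_snd, eval_proj_nth; reflexivity | apply HdB].
    + rewrite cond_b2n. unfold copies; cbn [sdom union nth]. now destruct (cfst x <? n).
  - exists (c_cond (RProj 0) (RComp sB [c_pred (RProj 0)]) (c_const 2)).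
    intros i. eapply eval_eq.
    + apply eval_cond; [apply eval_proj_nth; reflexivity | | apply eval_const].
      eapply eval_comp1; [apply eval_pred, eval_proj_nth; reflexivity | apply HsB].
    + now destruct i.
  - set (M := max (width rA) (width rB)).
    exists (c_cond (RProj 0)
              (c_cond (c_ltb (c_fst (RProj 1)) (c_const n))
                      (map_rel_code rA sA (retract_code dA a0) M)
                      (map_rel_code rB sB (retract_code dB b0) M))
              (c_eqb (c_fst (RProj 1)) (c_fst (RProj 2)))).
    intros i xs Hlen _. eapply eval_eq.
    + apply eval_cond; [apply eval_proj_nth; reflexivity | apply eval_cond |].
      * apply eval_ltb; [apply eval_fst, eval_proj_nth; reflexivity | apply eval_const].
      * apply eval_map_rel with (Z := A); auto; [intros; now apply eval_retract
                                                | intros; now apply retract_dom | lia].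
      * apply eval_map_rel with (Z := B); auto; [intros; now apply eval_retract
                                                | intros; now apply retract_dom | lia].
      * apply eval_eqb; apply eval_fst, eval_proj_nth; reflexivity.
    + destruct i as [|k]; [reflexivity|]. cbn in Hlen.
      rewrite cond_b2n. unfold copies; cbn [srel union pred cond nth].
      rewrite <- Hsar in Hlen.
      destruct (cfst (nth 0 xs 0) <? n); [rewrite <- Hlen | rewrite <- Hsar, <- Hlen];
        now rewrite map_nth_seq.
Qed.

Definition compatible (A B : structure) : Prop :=
  (forall i, sar A i = sar B i) /\ (forall k, sar A k = 0 -> srel A k [] = srel B k []).

Lemma embedding_compatible A B f : is_embedding A B f -> compatible A B.
Proof.
  intros [Hsar [_ [_ Hrel]]]. split; [exact Hsar|].
  intros k Hk. symmetry. apply (Hrel k []); [now rewrite Hk | intros x []].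
Qed.

Lemma embedding_id A : is_embedding A A (fun x => x).
Proof. repeat split; auto. intros i xs _ _. now rewrite map_id. Qed.

Lemma ltb_0_r c : (c <? 0) = false.
Proof. reflexivity. Qed.

Lemma copies_pointed n A B a0 b0 :
  (forall i, sar A i = sar B i) -> sdom A a0 = true -> sdom B b0 = true ->
  pointed (sar B) (fun c => if c <? n then A else B) (fun c => if c <? n then a0 else b0).
Proof. intros Hsar Ha0 Hb0 c. now destruct (c <? n). Qed.

Lemma copies_fold n A B a0 f :
  is_embedding A B f -> sdom A a0 = true ->
  is_embedding (copies n A B a0 (f a0)) (copies 0 A B a0 (f a0))
    (union_map id (fun c v => if c <? n then f v else v)).
Proof.
  intros Hf Ha0. destruct (embedding_compatible _ _ _ Hf) as [Hsar Hnullary].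
  apply union_map_embedding.
  - apply copies_pointed; auto. now apply Hf.
  - now intros c c'.
  - intros c. cbn -[Nat.ltb]. rewrite ltb_0_r.
    destruct (c <? n); [exact Hf | apply embedding_id].
  - intros c. cbn -[Nat.ltb]. rewrite ltb_0_r. now destruct (c <? n).
  - intros k Hk. cbn -[Nat.ltb]. rewrite ltb_0_r.
    destruct (0 <? n); [|reflexivity]. symmetry. apply Hnullary. now rewrite Hsar.
Qed.

Lemma copies_shift n A B a0 b0 :
  compatible A B -> sdom A a0 = true -> sdom B b0 = true ->
  is_embedding (copies 0 A B a0 b0) (copies n A B a0 b0)
    (union_map (Nat.add n) (fun _ v => v)).
Proof.
  intros [Hsar Hnullary] Ha0 Hb0.
  assert (Hright : forall c, n + c <? n = false) by (intros c; apply Nat.ltb_ge; lia).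
  apply union_map_embedding.
  - now apply copies_pointed.
  - intros c c'. lia.
  - intros c. cbn -[Nat.ltb]. rewrite ltb_0_r, Hright. apply embedding_id.
  - intros c. cbn -[Nat.ltb]. now rewrite ltb_0_r, Hright.
  - intros k Hk. cbn -[Nat.ltb]. rewrite ltb_0_r.
    destruct (0 <? n); [|reflexivity]. apply Hnullary. now rewrite Hsar.
Qed.

Lemma copies_component n A B a0 b0 h :
  0 < n -> compatible A B -> sdom A a0 = true -> sdom B b0 = true ->
  is_embedding (copies n A B a0 b0) (copies 0 A B a0 b0) h ->
  is_embedding A B (fun a => csnd (h (cpair 0 a))).
Proof.
  intros Hn [Hsar Hnullary] Ha0 Hb0 Hh.
  assert (H0n : 0 <? n = true) by now apply Nat.ltb_lt.
  assert (Hnullary' : forall c' k, sar B k = 0 ->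
            srel (if c' <? 0 then A else B) k [] = srel (if 0 <? n then A else B) k []).
  { intros c' k Hk. rewrite ltb_0_r, H0n. symmetry. apply Hnullary. now rewrite Hsar. }
  destruct (union_embedding_component _ _ _ _ _ h 0
              (copies_pointed n A B a0 b0 Hsar Ha0 Hb0)
              (copies_pointed 0 A B a0 b0 Hsar Ha0 Hb0) Hnullary' Hh) as [c' Hc'].
  cbv beta in Hc'. now rewrite ltb_0_r, H0n in Hc'.
Qed.

Lemma embedding_from_empty A B f g :
  is_embedding A B f -> ~ (exists a, sdom A a = true) -> is_embedding A B g.
Proof.
  intros [Hsar [_ [_ Hrel]]] Hempty.
  split; [exact Hsar | split; [|split]].
  - intros x Hx. exfalso. eauto.
  - intros x y Hx. exfalso. eauto.
  - intros i [|x xs] Hlen Hxs.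
    + exact (Hrel i [] Hlen Hxs).
    + exfalso. apply Hempty. exists x. apply Hxs. now left.
Qed.

Lemma union_map_computable O sigma g esigma eg :
  (forall c, eval O esigma [c] (sigma c)) -> (forall c v, eval O eg [c; v] (g c v)) ->
  O_computable O (union_map sigma g).
Proof.
  intros Hsigma Hg. exists (c_pair (RComp esigma [c_fst (RProj 0)])
                            (RComp eg [c_fst (RProj 0); c_snd (RProj 0)])).
  intros x. apply eval_pair.
  - eapply eval_comp1; [apply eval_fst, eval_proj_nth; reflexivity | apply Hsigma].
  - eapply eval_comp2; [apply eval_fst, eval_proj_nth; reflexivity
                       | apply eval_snd, eval_proj_nth; reflexivity | apply Hg].
Qed.

Lemma copies_fold_computable O n f :
  O_computable O f -> O_computable O (union_map id (fun c v => if c <? n then f v else v)).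
Proof.
  intros [ef Hf]. apply union_map_computable with
    (esigma := RProj 0)
    (eg := c_cond (c_ltb (RProj 0) (c_const n)) (RComp ef [RProj 1]) (RProj 1)).
  - intros c. now apply eval_proj_nth.
  - intros c v. rewrite <- cond_b2n. apply eval_cond.
    + apply eval_ltb; [apply eval_proj_nth; reflexivity | apply eval_const].
    + eapply eval_comp1; [apply eval_proj_nth; reflexivity | apply Hf].
    + now apply eval_proj_nth.
Qed.

Lemma copies_shift_computable O n : O_computable O (union_map (Nat.add n) (fun _ v => v)).
Proof.
  apply union_map_computable with (esigma := c_add (c_const n) (RProj 0)) (eg := RProj 1).
  - intros c. apply eval_add; [apply eval_const | now apply eval_proj_nth].
  - intros c v. now apply eval_proj_nth.
Qed.

Lemma component_computable O h c :
  O_computable O h -> O_computable O (fun a => csnd (h (cpair c a))).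
Proof.
  intros [eh Hh]. exists (c_snd (RComp eh [c_pair (c_const c) (RProj 0)])).
  intros a. apply eval_snd. eapply eval_comp1; [|apply Hh].
  apply eval_pair; [apply eval_const | now apply eval_proj_nth].
Qed.

Theorem proposition3p4 (D : nat -> bool) :
  low_for_embeddings D <-> low_for_biembeddings D.
Proof.
  split.
  - intros Hlow A B HA HB [HAB HBA]. split; now apply Hlow.
  - intros Hlow A B HA HB [f [Hfc Hf]].
    destruct (classic (exists a, sdom A a = true)) as [[a0 Ha0] | Hempty].
    + pose proof (embedding_compatible _ _ _ Hf) as Hcompat.
      assert (Hb0 : sdom B (f a0) = true) by now apply Hf.
      assert (HS : computable_structure (copies 1 A B a0 (f a0)))
        by (apply copies_computable; auto; apply Hcompat).
      assert (HX : computable_structure (copies 0 A B a0 (f a0)))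
        by (apply copies_computable; auto; apply Hcompat).
      destruct (Hlow _ _ HS HX) as [[h [Hhc Hh]] _].
      { split; eexists; split.
        - apply copies_fold_computable with (n := 1). exact Hfc.
        - now apply copies_fold.
        - apply copies_shift_computable with (n := 1).
        - now apply copies_shift. }
      exists (fun a => csnd (h (cpair 0 a))). split.
      * now apply component_computable.
      * eapply copies_component with (n := 1); eauto.
    + exists (fun _ => 0). split.
      * exists RZero. intros x. apply ev_zero.
      * eapply embedding_from_empty; eassumption.
Qed.
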